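(* Let $m\in[0,1]$, $n=\sqrt{1-m^2}$, and for $k\in[-\pi,\pi]$ define $\omega(k,m)=\arccos(n\cos k)\in[0,\pi]$, $\omega_{\rm D}=\sqrt{k^2+m^2}$, $v=\partial_k\omega=\frac{n\sin k}{\sin\omega}$, $v_{\rm D}=\frac{k}{\sqrt{k^2+m^2}}$, and $$\alpha(k,m):=\omega_{\rm D}-\omega,\qquad \beta(k,m):=\tfrac12\Big(1-v\,v_{\rm D}-\sqrt{(1-v^2)(1-v_{\rm D}^2)}\Big).$$ Let $0\le\bar k<\pi$. Then for every $m\in[0,1]$, $$\max_{k\in[-\bar k,\bar k]}|\alpha(k,m)|=\max_{k\in\{0,\bar k\}}|\alpha(k,m)|,\qquad \max_{k\in[-\bar k,\bar k]}|\beta(k,m)|=\max_{k\in\{0,\bar k\}}|\beta(k,m)|.$$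
   Context: $\omega$ is the dispersion relation of the one-dimensional Dirac quantum cellular automaton with mass parameter $m$, $\omega_{\rm D}$ the Dirac dispersion relation (Planck units), and $v$, $v_{\rm D}$ the corresponding group velocities. *)

From Stdlib Require Import Reals Lra.
Open Scope R_scope.

Definition nn (m : R) : R := sqrt (1 - m ^ 2).
Definition omega (k m : R) : R := acos (nn m * cos k).
Definition omegaD (k m : R) : R := sqrt (k ^ 2 + m ^ 2).
(* group velocities, by the paper's explicit formulas (Stdlib: x/0 = 0 at 0/0 points) *)
Definition vel (k m : R) : R := nn m * sin k / sin (omega k m).
Definition velD (k m : R) : R := k / sqrt (k ^ 2 + m ^ 2).

Definition alpha (k m : R) : R := omegaD k m - omega k m.
Definition beta (k m : R) : R :=
  / 2 * (1 - vel k m * velD k m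
         - sqrt ((1 - vel k m ^ 2) * (1 - velD k m ^ 2))).

Definition IsMaxOn (S : R -> Prop) (f : R -> R) (M : R) : Prop :=
  (exists x, S x /\ f x = M) /\ (forall x, S x -> f x <= M).

(** Both [alpha] and [beta] are even in [k], so it suffices to show that they
    are nondecreasing on [[0, kbar]]: then [f 0 <= f k <= f kbar] for every
    [k] in [[-kbar, kbar]], and [|f k|] is bounded by the larger of the two
    endpoint values.  For [m = 0] both functions vanish on [[0, PI)].  For
    [m > 0], [alpha' = velD - vel], and [vel] is the Dirac velocity
    [p / sqrt (p^2 + m^2)] at the effective momentum [p = n sin k <= k].
    Writing both velocities as [sin (atan (p / m))] turns [beta] into
    [(1 - cos theta) / 2] with [theta = atan (k / m) - atan (n sin k / m)],
    and [theta] increases from [0] and stays below [PI]. *)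

From Stdlib Require Import Reals Lra.
From Coquelicot Require Import Coquelicot.
Open Scope R_scope.

Lemma sin_ge_cubic k : 0 <= k <= PI -> k - k ^ 3 / 6 <= sin k.
Proof.
  intros [hk0 hk1]. destruct (sin_bound k 0 hk0 hk1) as [h _].
  revert h. unfold sin_approx, sin_term. simpl. lra.
Qed.

Lemma cos_le_quartic k : - PI / 2 <= k <= PI / 2 -> cos k <= 1 - k ^ 2 / 2 + k ^ 4 / 24.
Proof.
  intros [hk0 hk1]. destruct (cos_bound k 0 hk0 hk1) as [_ h].
  revert h. unfold cos_approx, cos_term. simpl. lra.
Qed.

Lemma sq_mul_cos_le_sin_sq k : 0 <= k <= PI -> k ^ 2 * cos k <= sin k ^ 2.
Proof.
  intros hk. assert (hpi := PI_4).
  destruct (Rle_or_lt (cos k) 0) as [hc | hc].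
  { assert (0 <= k ^ 2) by nra. nra. }
  assert (hk2 : k <= PI / 2).
  { destruct (Rle_or_lt k (PI / 2)) as [|hlt]; [assumption|].
    assert (cos k < 0) by (apply cos_lt_0; lra). lra. }
  assert (hs := sin_ge_cubic k hk).
  assert (hc' := cos_le_quartic k ltac:(lra)).
  assert (hcubic : 0 <= k - k ^ 3 / 6) by nra.
  assert (hsq : (k - k ^ 3 / 6) ^ 2 <= sin k ^ 2) by (apply pow_incr; lra).
  assert (htaylor : k ^ 2 * (1 - k ^ 2 / 2 + k ^ 4 / 24) <= (k - k ^ 3 / 6) ^ 2).
  { assert (0 <= k ^ 4 * (12 - k ^ 2)) by (apply Rmult_le_pos; [apply pow_le |]; nra).
    nra. }
  assert (k ^ 2 * cos k <= k ^ 2 * (1 - k ^ 2 / 2 + k ^ 4 / 24))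
    by (apply Rmult_le_compat_l; [apply pow2_ge_0 | exact hc']).
  lra.
Qed.

Lemma nondecreasing_of_derive_nonneg (f df : R -> R) (a b : R) :
  (forall x, a <= x <= b -> is_derive f x (df x)) ->
  (forall x, a <= x <= b -> 0 <= df x) ->
  forall x y, a <= x -> x <= y -> y <= b -> f x <= f y.
Proof.
  intros hd hpos x y hx hxy hy.
  destruct (Req_dec x y) as [<- | hne]; [lra|].
  assert (hmin : Rmin x y = x) by (apply Rmin_left; lra).
  assert (hmax : Rmax x y = y) by (apply Rmax_right; lra).
  destruct (MVT_gen f x y df) as [c [hc e]]; rewrite ?hmin, ?hmax in *.
  - intros z hz. apply hd. lra.
  - intros z hz. apply continuity_pt_filterlim.
    apply (ex_derive_continuous (K := R_AbsRing) (V := R_NormedModule)).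
    exists (df z). apply hd. lra.
  - assert (0 <= df c) by (apply hpos; lra). nra.
Qed.

Lemma Rabs_le_Rmax_Rabs a x b : a <= x <= b -> Rabs x <= Rmax (Rabs a) (Rabs b).
Proof.
  intros hx. apply Rabs_le.
  assert (Rabs a <= Rmax (Rabs a) (Rabs b)) by apply Rmax_l.
  assert (Rabs b <= Rmax (Rabs a) (Rabs b)) by apply Rmax_r.
  assert (- a <= Rabs a) by apply Rabs_maj2.
  assert (b <= Rabs b) by apply Rle_abs.
  lra.
Qed.

Lemma IsMaxOn_abs_even (f : R -> R) (b : R) : 0 <= b ->
  (forall k, f (- k) = f k) ->
  (forall x y, 0 <= x -> x <= y -> y <= b -> f x <= f y) ->
  IsMaxOn (fun k => - b <= k <= b) (fun k => Rabs (f k)) (Rmax (Rabs (f 0)) (Rabs (f b))).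
Proof.
  intros hb heven hmono. split.
  - apply Rmax_case; [exists 0 | exists b]; split; auto; lra.
  - intros k hk. apply Rabs_le_Rmax_Rabs.
    destruct (Rle_or_lt 0 k) as [hk0 | hk0].
    + split; apply hmono; lra.
    + rewrite <- (heven k). split; apply hmono; lra.
Qed.

Definition speed_of (p m : R) : R := p / sqrt (p ^ 2 + m ^ 2).

Lemma speed_of_le m p q : 0 < m -> 0 <= p <= q -> speed_of p m <= speed_of q m.
Proof.
  intros hm hpq. unfold speed_of.
  assert (hp := sqrt_lt_R0 (p ^ 2 + m ^ 2) ltac:(nra)).
  assert (hq := sqrt_lt_R0 (q ^ 2 + m ^ 2) ltac:(nra)).
  assert (hmul : p * sqrt (q ^ 2 + m ^ 2) <= q * sqrt (p ^ 2 + m ^ 2)).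
  { apply Rsqr_incr_0_var; [|nra].
    rewrite !Rsqr_mult, !Rsqr_sqrt by nra. unfold Rsqr.
    assert (p * p * (m * m) <= q * q * (m * m)) by (apply Rmult_le_compat_r; nra).
    nra. }
  apply (Rmult_le_reg_r (sqrt (p ^ 2 + m ^ 2) * sqrt (q ^ 2 + m ^ 2))); [nra|].
  replace (p / _ * _) with (p * sqrt (q ^ 2 + m ^ 2)) by (field; lra).
  replace (q / _ * _) with (q * sqrt (p ^ 2 + m ^ 2)) by (field; lra).
  exact hmul.
Qed.

Lemma sqrt_one_add_sq_div p m : 0 < m -> sqrt (1 + (p / m)²) = sqrt (p ^ 2 + m ^ 2) / m.
Proof.
  intros hm. assert (hpos : 0 <= p ^ 2 + m ^ 2) by nra.
  apply sqrt_lem_1.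
  - assert (0 <= (p / m)²) by apply Rle_0_sqr. lra.
  - apply Rdiv_le_0_compat; [apply sqrt_pos | lra].
  - replace (sqrt (p ^ 2 + m ^ 2) / m * (sqrt (p ^ 2 + m ^ 2) / m))
      with (sqrt (p ^ 2 + m ^ 2) * sqrt (p ^ 2 + m ^ 2) / (m * m)) by (field; lra).
    rewrite sqrt_sqrt by lra. unfold Rsqr. field. lra.
Qed.

Lemma speed_of_atan p m : 0 < m -> speed_of p m = sin (atan (p / m)).
Proof.
  intros hm. unfold speed_of. rewrite sin_atan, sqrt_one_add_sq_div by lra.
  assert (0 < sqrt (p ^ 2 + m ^ 2)) by (apply sqrt_lt_R0; nra).
  field. split; lra.
Qed.

Lemma sqrt_one_sub_sin_atan_sq x : sqrt (1 - sin (atan x) ^ 2) = cos (atan x).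
Proof.
  assert (hcos : 0 < cos (atan x)).
  { rewrite cos_atan. apply Rdiv_lt_0_compat; [lra|]. apply sqrt_lt_R0.
    assert (0 <= x²) by apply Rle_0_sqr. lra. }
  rewrite <- (sqrt_pow2 (cos (atan x))) by lra. f_equal.
  assert (h := sin2_cos2 (atan x)). unfold Rsqr in h. nra.
Qed.

Lemma nn_nonneg m : 0 <= nn m.
Proof. apply sqrt_pos. Qed.

Lemma nn_sq m : - 1 <= m <= 1 -> nn m ^ 2 = 1 - m ^ 2.
Proof. intros hm. apply pow2_sqrt. nra. Qed.

Lemma one_sub_nn_cos_sq m k : - 1 <= m <= 1 ->
  1 - (nn m * cos k) ^ 2 = (nn m * sin k) ^ 2 + m ^ 2.
Proof.
  intros hm. assert (hn := nn_sq m hm). assert (h := sin2_cos2 k). unfold Rsqr in h.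
  replace (m ^ 2) with (1 - nn m ^ 2) by lra. nra.
Qed.

Lemma sin_omega k m : - 1 <= m <= 1 -> sin (omega k m) = sqrt ((nn m * sin k) ^ 2 + m ^ 2).
Proof.
  intros hm. assert (h := one_sub_nn_cos_sq m k hm).
  unfold omega. rewrite sin_acos.
  - f_equal. unfold Rsqr. lra.
  - assert (0 <= (nn m * sin k) ^ 2) by nra. nra.
Qed.

Lemma vel_speed_of k m : - 1 <= m <= 1 -> vel k m = speed_of (nn m * sin k) m.
Proof. intros hm. unfold vel, speed_of. rewrite sin_omega by assumption. reflexivity. Qed.

Lemma vel_le_velD k m : 0 < m <= 1 -> 0 <= k <= PI -> vel k m <= velD k m.
Proof.
  intros hm hk. rewrite vel_speed_of by lra. apply speed_of_le; [lra|].
  assert (hn := nn_sq m ltac:(lra)). assert (hn0 := nn_nonneg m).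
  assert (hn1 : nn m <= 1) by nra.
  assert (hs0 : 0 <= sin k) by (apply sin_ge_0; lra).
  assert (hsk : sin k <= k).
  { destruct (Req_dec k 0) as [-> | hne]; [rewrite sin_0; lra|].
    left. apply sin_lt_x. lra. }
  split; [apply Rmult_le_pos | nra]; lra.
Qed.

Lemma is_derive_omegaD k m : 0 < m -> is_derive (fun k => omegaD k m) k (velD k m).
Proof.
  intros hm. unfold omegaD, velD. auto_derive; [nra|].
  replace (k * (k * 1) + m * (m * 1)) with (k ^ 2 + m ^ 2) by ring.
  assert (0 < sqrt (k ^ 2 + m ^ 2)) by (apply sqrt_lt_R0; nra).
  field. lra.
Qed.

Lemma is_derive_omega k m : 0 < m <= 1 -> is_derive (fun k => omega k m) k (vel k m).
Proof.
  intros hm. assert (he := one_sub_nn_cos_sq m k ltac:(lra)).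
  assert (hpos : 0 < 1 - (nn m * cos k) ^ 2) by (assert (0 <= (nn m * sin k) ^ 2) by nra; nra).
  assert (hacos : is_derive acos (nn m * cos k) (-1 / sqrt (1 - (nn m * cos k) ^ 2))).
  { apply is_derive_Reals.
    assert (hrange : -1 < nn m * cos k < 1) by (split; nra).
    apply (derive_pt_eq_1 _ _ _ (derivable_pt_acos _ hrange)).
    rewrite derive_pt_acos, Rsqr_pow2. reflexivity. }
  unfold vel. rewrite sin_omega, <- he by lra. unfold omega.
  assert (hcos : is_derive (fun k => nn m * cos k) k (- (nn m * sin k)))
    by (auto_derive; [auto | ring]).
  assert (0 < sqrt (1 - (nn m * cos k) ^ 2)) by (apply sqrt_lt_R0; lra).
  set (s := sqrt (1 - (nn m * cos k) ^ 2)) in *.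
  replace (nn m * sin k / s) with (scal (- (nn m * sin k)) (-1 / s))
    by (unfold scal; simpl; unfold mult; simpl; field; lra).
  exact (is_derive_comp _ _ _ _ _ hacos hcos).
Qed.

Lemma alpha_massless k : 0 <= k <= PI -> alpha k 0 = 0.
Proof.
  intros hk. unfold alpha, omegaD, omega, nn.
  replace (1 - 0 ^ 2) with 1 by ring. rewrite sqrt_1, Rmult_1_l, acos_cos by lra.
  replace (k ^ 2 + 0 ^ 2) with (k ^ 2) by ring. rewrite sqrt_pow2; lra.
Qed.

Lemma alpha_nondecreasing m x y : 0 <= m <= 1 -> 0 <= x -> x <= y -> y <= PI ->
  alpha x m <= alpha y m.
Proof.
  intros hm hx hxy hy. destruct (Req_dec m 0) as [-> | hm0].
  { rewrite !alpha_massless by lra. lra. }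
  apply (nondecreasing_of_derive_nonneg (fun k => alpha k m)
           (fun k => velD k m - vel k m) 0 PI); auto.
  - intros k _. apply (is_derive_minus (fun k => omegaD k m) (fun k => omega k m)).
    + apply is_derive_omegaD. lra.
    + apply is_derive_omega. lra.
  - intros k hk. assert (vel k m <= velD k m) by (apply vel_le_velD; lra). lra.
Qed.

Definition angle_gap (m k : R) : R := atan (k / m) - atan (nn m * sin k / m).

Lemma beta_angle_gap k m : 0 < m <= 1 -> beta k m = / 2 * (1 - cos (angle_gap m k)).
Proof.
  intros hm. unfold beta, angle_gap.
  rewrite vel_speed_of by lra. change (velD k m) with (speed_of k m).
  rewrite !speed_of_atan by lra.
  assert (hcos_sq : forall x, 0 <= 1 - sin (atan x) ^ 2)
    by (intros x; destruct (SIN_bound (atan x)); nra).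
  rewrite sqrt_mult by apply hcos_sq.
  rewrite !sqrt_one_sub_sin_atan_sq, cos_minus. ring.
Qed.

Lemma angle_gap_0 m : angle_gap m 0 = 0.
Proof. unfold angle_gap. rewrite sin_0, Rmult_0_r, Rdiv_0_l, atan_0. ring. Qed.

Lemma angle_gap_lt_PI m k : angle_gap m k < PI.
Proof.
  unfold angle_gap.
  destruct (atan_bound (k / m)). destruct (atan_bound (nn m * sin k / m)). lra.
Qed.

Lemma nn_cos_mul_le m k : 0 < m <= 1 -> 0 <= k <= PI ->
  nn m * cos k * (m ^ 2 + k ^ 2) <= m ^ 2 + (nn m * sin k) ^ 2.
Proof.
  intros hm hk. assert (hn := nn_sq m ltac:(lra)). assert (hn0 := nn_nonneg m).
  set (n := nn m) in *. set (c := cos k). set (s := sin k).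
  assert (hsc : s ^ 2 + c ^ 2 = 1).
  { assert (h := sin2_cos2 k). unfold Rsqr in h. unfold s, c. lra. }
  assert (hc := COS_bound k). fold c in hc.
  assert (hkin : n * c * k ^ 2 <= n * s ^ 2).
  { rewrite Rmult_assoc, (Rmult_comm c). apply Rmult_le_compat_l; [lra|].
    apply sq_mul_cos_le_sin_sq. lra. }
  assert (hn1 : n <= 1) by nra.
  assert (hid : m ^ 2 + n ^ 2 * s ^ 2 - n * s ^ 2 - n * c * m ^ 2
                = (1 - n) * (1 - n * c * (n + 1 - c))).
  { replace (m ^ 2) with (1 - n ^ 2) by lra. replace (s ^ 2) with (1 - c ^ 2) by lra. ring. }
  assert (hbound : n * c * (n + 1 - c) <= 1).
  { destruct (Rle_or_lt c 0) as [hc0 | hc0].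
    - assert (n * c <= 0) by nra. nra.
    - assert (n * c * (n + 1 - c) <= c * (n + 1 - c)) by (apply Rmult_le_compat_r; nra).
      nra. }
  assert (0 <= (1 - n) * (1 - n * c * (n + 1 - c))) by (apply Rmult_le_pos; lra).
  nra.
Qed.

Lemma is_derive_angle_gap m k : 0 < m ->
  is_derive (angle_gap m) k
    (m * (m ^ 2 + (nn m * sin k) ^ 2 - nn m * cos k * (m ^ 2 + k ^ 2))
       / ((m ^ 2 + k ^ 2) * (m ^ 2 + (nn m * sin k) ^ 2))).
Proof.
  intros hm. unfold angle_gap. auto_derive; [auto|].
  assert (0 < m ^ 2 + k ^ 2) by nra.
  assert (0 < m ^ 2 + (nn m * sin k) ^ 2) by nra.
  field. repeat split; nra.
Qed.

Lemma angle_gap_nondecreasing m x y : 0 < m <= 1 -> 0 <= x -> x <= y -> y <= PI ->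
  angle_gap m x <= angle_gap m y.
Proof.
  intros hm. apply nondecreasing_of_derive_nonneg with (df := fun k =>
    m * (m ^ 2 + (nn m * sin k) ^ 2 - nn m * cos k * (m ^ 2 + k ^ 2))
      / ((m ^ 2 + k ^ 2) * (m ^ 2 + (nn m * sin k) ^ 2))).
  - intros k _. apply is_derive_angle_gap. lra.
  - intros k hk. assert (hle := nn_cos_mul_le m k hm hk).
    apply Rdiv_le_0_compat; [apply Rmult_le_pos | apply Rmult_lt_0_compat]; nra.
Qed.

Lemma beta_massless k : 0 <= k < PI -> beta k 0 = 0.
Proof.
  intros hk. assert (hn : nn 0 = 1) by (unfold nn; replace (1 - 0 ^ 2) with 1 by ring; apply sqrt_1).
  unfold beta, vel, velD, omega. rewrite hn, !Rmult_1_l, acos_cos by lra.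
  replace (k ^ 2 + 0 ^ 2) with (k ^ 2) by ring. rewrite sqrt_pow2 by lra.
  destruct (Req_dec k 0) as [-> | hk0].
  - rewrite sin_0, !Rdiv_0_l, Rmult_0_l. replace ((1 - 0 ^ 2) * (1 - 0 ^ 2)) with 1 by ring.
    rewrite sqrt_1. ring.
  - assert (0 < sin k) by (apply sin_gt_0; lra).
    rewrite !Rdiv_diag by lra. replace ((1 - 1 ^ 2) * (1 - 1 ^ 2)) with 0 by ring.
    rewrite sqrt_0. ring.
Qed.

Lemma beta_nondecreasing m x y : 0 <= m <= 1 -> 0 <= x -> x <= y -> y < PI ->
  beta x m <= beta y m.
Proof.
  intros hm hx hxy hy. destruct (Req_dec m 0) as [-> | hm0].
  { rewrite !beta_massless by lra. lra. }
  assert (hm' : 0 < m <= 1) by lra.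
  rewrite !beta_angle_gap by exact hm'.
  assert (hgx : angle_gap m 0 <= angle_gap m x) by (apply angle_gap_nondecreasing; lra).
  assert (hgxy : angle_gap m x <= angle_gap m y) by (apply angle_gap_nondecreasing; lra).
  rewrite angle_gap_0 in hgx.
  assert (hlt := angle_gap_lt_PI m y).
  assert (cos (angle_gap m y) <= cos (angle_gap m x)) by (apply cos_decr_1; lra).
  lra.
Qed.

Lemma alpha_even k m : alpha (- k) m = alpha k m.
Proof. unfold alpha, omegaD, omega. rewrite cos_neg. do 3 f_equal. ring. Qed.

Lemma beta_even k m : beta (- k) m = beta k m.
Proof.
  assert (hv : vel (- k) m = - vel k m).
  { unfold vel, omega. rewrite sin_neg, cos_neg. unfold Rdiv. ring. }
  assert (hvD : velD (- k) m = - velD k m).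
  { unfold velD. replace ((- k) ^ 2) with (k ^ 2) by ring. unfold Rdiv. ring. }
  unfold beta. rewrite hv, hvD. do 2 f_equal; [ring|]. f_equal. ring.
Qed.

Theorem lemma2 (kbar : R) (hk0 : 0 <= kbar) (hk1 : kbar < PI)
  (m : R) (hm0 : 0 <= m) (hm1 : m <= 1) :
  IsMaxOn (fun k => - kbar <= k <= kbar) (fun k => Rabs (alpha k m))
          (Rmax (Rabs (alpha 0 m)) (Rabs (alpha kbar m)))
  /\
  IsMaxOn (fun k => - kbar <= k <= kbar) (fun k => Rabs (beta k m))
          (Rmax (Rabs (beta 0 m)) (Rabs (beta kbar m))).
Proof.
  split.
  - apply (IsMaxOn_abs_even (fun k => alpha k m)); [assumption | intro k; apply alpha_even |].
    intros x y hx hxy hy. apply alpha_nondecreasing; lra.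
  - apply (IsMaxOn_abs_even (fun k => beta k m)); [assumption | intro k; apply beta_even |].
    intros x y hx hxy hy. apply beta_nondecreasing; lra.
Qed.
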